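(* Let $D_{\mathrm{jnt}}$ be any distribution of $(\mathsf X,\bar{\mathsf Y},\mathsf Y)$ on $\mathcal X\times\{0,1\}\times\{0,1\}$, let $c,\bar c\in[0,1]$ and $\bar D\in\{\bar D_{\mathrm{DP}},\bar D_{\mathrm{EO}}\}$. Let $F$ be the fairness frontier: for $\tau\ge0$, $F(\tau)=V(\tau)-V(0)$ where $V(\tau)=\inf\{\mathrm{CS}(f;D,c): f\colon\mathcal X\to[0,1],\ \mathrm{CS}^\diamond(f;\bar D,\bar c)\ge\tau\}$. Define $$B_{c,\bar c}(u,v)=|u-\bar c|\cdot\mathbf 1[(u-\bar c)(v-c)<0],\qquad \Delta_{c,\bar c}(\bar\eta,\eta)=\mathbb E_{\mathsf X}\big[B_{c,\bar c}(\bar\eta(\mathsf X),\eta(\mathsf X))\big]-\mathbb I_\varphi(\bar P_1,\bar P_0),$$ with $\varphi(t)=-\min\big((1-\bar c)\bar\pi t,\ \bar c(1-\bar\pi)\big)$, and analogously $\Delta_{-c,\bar c}(\bar\eta,-\eta)=\mathbb E_{\mathsf X}\big[|\bar\eta(\mathsf X)-\bar c|\,\mathbf 1[(\bar\eta(\mathsf X)-\bar c)(-\eta(\mathsf X)+c)<0]\big]-\mathbb I_\varphi(\bar P_1,\bar P_0)$. Let $\tau^*=\min\big(\Delta_{c,\bar c}(\bar\eta,\eta),\Delta_{-c,\bar c}(\bar\eta,-\eta)\big)$. Then $F(\tau)=0$ for every $\tau\in[0,\tau^*]$.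
   Context: $D$ is the law of $(\mathsf X,\mathsf Y)$, $\bar D_{\mathrm{DP}}$ the law of $(\mathsf X,\bar{\mathsf Y})$, $\bar D_{\mathrm{EO}}$ the law of $(\mathsf X,\bar{\mathsf Y})$ conditional on $\mathsf Y=1$. $\eta(x)=\Pr(\mathsf Y=1\mid\mathsf X=x)$. With respect to $\bar D$: $\bar\eta(x)=\Pr_{\bar D}(\bar{\mathsf Y}=1\mid\mathsf X=x)$, $\bar\pi=\Pr_{\bar D}(\bar{\mathsf Y}=1)$, $\bar P_y$ is the law of $\mathsf X$ given $\bar{\mathsf Y}=y$ under $\bar D$, and $\mathbb E_{\mathsf X}$ is expectation over the $\mathsf X$-marginal of $\bar D$. For a convex $\varphi$, the $f$-divergence is $\mathbb I_\varphi(P,Q)=\int q\,\varphi(p/q)\,d\mu$ for densities $p,q$ w.r.t. a dominating measure $\mu$; for the $\varphi$ above this equals $-\int\min\big((1-\bar c)\bar\pi\,p,\ \bar c(1-\bar\pi)\,q\big)\,d\mu$. A randomised classifier $f\colon\mathcal X\to[0,1]$ predicts $1$ on $x$ with probability $f(x)$. For a distribution $E$ of $(\mathsf X,\mathsf Z)$ on $\mathcal X\times\{0,1\}$ with $p=\Pr(\mathsf Z=1)$: $\mathrm{FNR}(f;E)=\mathbb E_{\mathsf X\mid\mathsf Z=1}[1-f(\mathsf X)]$, $\mathrm{FPR}(f;E)=\mathbb E_{\mathsf X\mid\mathsf Z=0}[f(\mathsf X)]$, $\mathrm{CS}(f;E,c)=p(1-c)\,\mathrm{FNR}(f;E)+(1-p)c\,\mathrm{FPR}(f;E)$,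 and $\mathrm{CS}^\diamond(f;E,c)=\min\big(\mathrm{CS}(f;E,c),\mathrm{CS}(1-f;E,c)\big)$. *)

From HB Require Import structures.
From mathcomp Require Import all_boot all_order all_algebra.
From mathcomp Require Import all_classical all_reals all_analysis.
Set Implicit Arguments. Unset Strict Implicit. Unset Printing Implicit Defensive.
Import Order.TTheory GRing.Theory Num.Theory.
Local Open Scope classical_set_scope.
Local Open Scope ring_scope.

(* The joint distribution D_jnt of (X, Ybar, Y) is represented as the law of
   random elements X : Omega -> T, Ybar, Y : Omega -> bool on a probability
   space (Omega, P).  A distribution Dbar of (X, Z) is encoded by a "base
   event" S of Omega: Dbar is the law of (X, Z) under P conditioned on S
   (S = setT for D / Dbar_DP, S = [Y = 1] for Dbar_EO). *)

Section Defs.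
Context {dO dT : measure_display} {Omega : measurableType dO}
  {T : measurableType dT} {R : realType}.

Definition Dint (P : probability Omega R) (S A : set Omega) (g : Omega -> R) : R :=
  Rintegral P (A `&` S) g / fine (P S).

Definition Dprob (P : probability Omega R) (S A : set Omega) : R :=
  fine (P (A `&` S)) / fine (P S).

Definition FNR (P : probability Omega R) (S : set Omega) (X : Omega -> T)
    (Z : set Omega) (f : T -> R) : R :=
  Dint P S Z (fun w => 1 - f (X w)) / Dprob P S Z.

Definition FPR (P : probability Omega R) (S : set Omega) (X : Omega -> T)
    (Z : set Omega) (f : T -> R) : R :=
  Dint P S (~` Z) (fun w => f (X w)) / Dprob P S (~` Z).

Definition CS (P : probability Omega R) (S : set Omega) (X : Omega -> T)
    (Z : set Omega) (f : T -> R) (c : R) : R :=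
  let p := Dprob P S Z in
  p * (1 - c) * FNR P S X Z f + (1 - p) * c * FPR P S X Z f.

Definition CSdiam (P : probability Omega R) (S : set Omega) (X : Omega -> T)
    (Z : set Omega) (f : T -> R) (c : R) : R :=
  Num.min (CS P S X Z f c) (CS P S X Z (fun x => 1 - f x) c).

(* base event selecting Dbar: eo = false gives Dbar_DP, eo = true gives Dbar_EO *)
Definition Dbar_event (eo : bool) (Y : Omega -> bool) : set Omega :=
  if eo then [set w | Y w] else setT.

(* eta is a ([0,1]-valued, measurable) version of Pr(Z = 1 | X = x) under
   P( . | S) *)
Definition cond_prob (P : probability Omega R) (S : set Omega) (X : Omega -> T)
    (Z : set Omega) (eta : T -> R) : Prop :=
  measurable_fun setT eta /\ (forall x, 0 <= eta x <= 1) /\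
  forall A : set T, measurable A ->
    (\int[P]_(w in X @^-1` A `&` S) (eta (X w))%:E
       = P (X @^-1` A `&` S `&` Z))%E.

Definition Vfront (P : probability Omega R) (X : Omega -> T) (Y Ybar : Omega -> bool)
    (S : set Omega) (c cb tau : R) : \bar R :=
  ereal_inf [set (CS P setT X [set w | Y w] f c)%:E | f in
    [set f : T -> R | [/\ measurable_fun setT f, (forall x, 0 <= f x <= 1) &
                         tau <= CSdiam P S X [set w | Ybar w] f cb]]].

Definition frontier (P : probability Omega R) (X : Omega -> T) (Y Ybar : Omega -> bool)
    (S : set Omega) (c cb tau : R) : \bar R :=
  (Vfront P X Y Ybar S c cb tau - Vfront P X Y Ybar S c cb 0)%E.

Definition Bcc (c cb u v : R) : R :=
  `|u - cb| * (if (u - cb) * (v - c) < 0 then 1 else 0).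

(* I_phi(Pbar_1, Pbar_0) = - \int min((1-cb) pibar p, cb (1-pibar) q) dmu,
   with mu the X-marginal of Dbar and p = etabar/pibar, q = (1-etabar)/(1-pibar)
   the densities of Pbar_1, Pbar_0 w.r.t. mu. *)
Definition Iphi (P : probability Omega R) (S : set Omega) (X : Omega -> T)
    (Zbar : set Omega) (etabar : T -> R) (cb : R) : R :=
  let pibar := Dprob P S Zbar in
  let p x := etabar x / pibar in
  let q x := (1 - etabar x) / (1 - pibar) in
  - Dint P S setT (fun w => Num.min ((1 - cb) * pibar * p (X w))
                                    (cb * (1 - pibar) * q (X w))).

Definition Delta (P : probability Omega R) (S : set Omega) (X : Omega -> T)
    (Zbar : set Omega) (etabar eta : T -> R) (c cb : R) : R :=
  Dint P S setT (fun w => Bcc c cb (etabar (X w)) (eta (X w)))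
  - Iphi P S X Zbar etabar cb.

End Defs.

From HB Require Import structures.
From mathcomp Require Import all_boot all_order all_algebra.
From mathcomp Require Import all_classical all_reals all_analysis.
From mathcomp Require Import measurable_realfun lra.
Import Order.TTheory GRing.Theory Num.Theory.
Local Open Scope classical_set_scope.
Local Open Scope ring_scope.

(* The threshold classifier f = 1[eta > c] minimises CS(.; D, c) over all
   randomised classifiers: CS is the expectation of the conditional risk
   (1 - c)(1 - f) eta + c f (1 - eta), which f minimises pointwise.  Pointwise
   again, the conditional risk of f (resp. 1 - f) with respect to etabar and cb
   dominates B_{c,cb}(etabar, eta) (resp. B_{-c,cb}(etabar, -eta)) plus the
   integrand of -I_phi; integrating gives CS^diam(f; Dbar, cb) >= tau*.  Hence f
   is feasible for every tau <= tau*, and V(tau) = CS(f; D, c) = V(0). *)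

Section pointwise.
Context {R : realFieldType}.
Implicit Types a b c cb u g pb : R.

Lemma mulr_in01 {a b} : 0 <= a <= 1 -> 0 <= b <= 1 -> 0 <= a * b <= 1.
Proof. by move=> /andP[? ?] /andP[? ?]; rewrite mulr_ge0 //= mulr_ile1. Qed.

Lemma onem_in01 {a} : 0 <= a <= 1 -> 0 <= 1 - a <= 1.
Proof. by move=> /andP[? ?]; apply/andP; split; lra. Qed.

Definition cond_risk c u g : R := (1 - c) * ((1 - g) * u) + c * (g * (1 - u)).

Lemma cond_risk_in01 c u g : 0 <= c <= 1 -> 0 <= u <= 1 -> 0 <= g <= 1 ->
  0 <= cond_risk c u g <= 1.
Proof.
move=> c01 u01 g01; have /andP[? ?] := c01.
have /andP[? ?] := mulr_in01 (onem_in01 g01) u01.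
have /andP[? ?] := mulr_in01 g01 (onem_in01 u01).
by rewrite /cond_risk; apply/andP; split; nra.
Qed.

Lemma cond_risk_threshold_le c u g : 0 <= g <= 1 ->
  cond_risk c u (if c < u then 1 else 0) <= cond_risk c u g.
Proof. by move=> /andP[? ?]; rewrite /cond_risk -subr_ge0; case: ltrP => ?; nra. Qed.

Definition Iphi_integrand cb pb u : R :=
  Num.min ((1 - cb) * pb * (u / pb)) (cb * (1 - pb) * ((1 - u) / (1 - pb))).

(* No hypothesis on pb: for pb = 0 or pb = 1 the division by zero makes the
   corresponding term vanish. *)
Lemma Iphi_integrand_bounds cb pb u : 0 <= cb <= 1 -> 0 <= u <= 1 ->
  0 <= Iphi_integrand cb pb u <= Num.min ((1 - cb) * u) (cb * (1 - u)).
Proof.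
move=> /andP[cb0 cb1] /andP[u0 u1].
have divK_le (a b : R) : 0 <= a -> 0 <= b * (a / b) <= a.
  move=> a0; have [->|b0] := eqVneq b 0; first by rewrite mul0r lexx a0.
  by rewrite mulrC divfK // lexx a0.
have u1' : 0 <= 1 - u by rewrite subr_ge0.
have /andP[p0 p1] := divK_le u pb u0.
have /andP[q0 q1] := divK_le (1 - u) (1 - pb) u1'.
rewrite /Iphi_integrand -!mulrA !le_min !ge_min.
apply/andP; split.
  by apply/andP; split; apply: mulr_ge0; rewrite ?subr_ge0.
by apply/andP; split; apply/orP; [left|right]; apply: ler_wpM2l; rewrite ?subr_ge0.
Qed.

Lemma Iphi_integrand_in01 cb pb u : 0 <= cb <= 1 -> 0 <= u <= 1 ->
  0 <= Iphi_integrand cb pb u <= 1.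
Proof.
move=> cb01 u01; have /andP[-> I_le] := Iphi_integrand_bounds _ pb _ cb01 u01.
rewrite (le_trans I_le) // ge_min.
by have /andP[_ ->] := mulr_in01 (onem_in01 cb01) u01.
Qed.
End pointwise.

Lemma Bcc_in01 {R : realType} (c cb u v : R) : 0 <= cb <= 1 -> 0 <= u <= 1 ->
  0 <= Bcc c cb u v <= 1.
Proof.
move=> /andP[? ?] /andP[? ?]; rewrite /Bcc.
case: ifP => _; rewrite ?mulr0 ?lexx ?ler01 //.
by rewrite mulr1 normr_ge0 /=; case: (lerP 0 (u - cb)) => ?;
  [rewrite ger0_norm | rewrite ltr0_norm] => //; lra.
Qed.

Lemma Bcc_add_le_cond_risk {R : realType} (c cb u v g m : R) :
  0 <= cb <= 1 -> 0 <= u <= 1 -> 0 <= g <= 1 ->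
  (c < v -> g = 1) -> (v < c -> g = 0) ->
  m <= Num.min ((1 - cb) * u) (cb * (1 - u)) ->
  Bcc c cb u v + m <= cond_risk cb u g.
Proof.
move=> /andP[? ?] /andP[? ?] /andP[? ?] g1 g0; rewrite le_min => /andP[? ?].
rewrite /Bcc /cond_risk; case: ltrP => hB; rewrite ?(mulr1, mulr0, add0r); last first.
  by case: (ltrgtP c v) => [/g1 -> | /g0 -> | _]; nra.
have [/[dup] /g1 -> | /[dup] /g0 -> | cv] := ltrgtP c v; last first.
  by rewrite cv subrr mulr0 ltxx in hB.
all: move=> ?; case: (ltrgtP u cb) => ?;
  rewrite ?(ltr0_norm, gtr0_norm) ?subr_lt0 ?subr_gt0 //; nra.
Qed.

Lemma measurable_cond_risk {d : measure_display} {T : measurableType d}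
  {R : realType} (c : R) (u g : T -> R) :
  measurable_fun setT u -> measurable_fun setT g ->
  measurable_fun setT (fun x => cond_risk c (u x) (g x)).
Proof.
move=> mu mg; apply: measurable_funD; apply: measurable_funM => //;
  apply: measurable_funM => //; exact: measurable_funB.
Qed.

Lemma measurable_Iphi_integrand {d : measure_display} {T : measurableType d}
  {R : realType} (cb pb : R) (u : T -> R) : measurable_fun setT u ->
  measurable_fun setT (fun x => Iphi_integrand cb pb (u x)).
Proof.
move=> mu; apply: measurable_minr; apply: measurable_funM => //;
  apply: measurable_funM => //; exact: measurable_funB.
Qed.

Lemma measurable_Bcc {d : measure_display} {T : measurableType d} {R : realType}
  (c cb : R) (u v : T -> R) : measurable_fun setT u -> measurable_fun setT v ->
  measurable_fun setT (fun x => Bcc c cb (u x) (v x)).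
Proof.
move=> mu mv; have -> : (fun x => Bcc c cb (u x) (v x)) =
    (fun x => `|u x - cb| * \1_`]-oo, 0[ ((u x - cb) * (v x - c))).
  apply/funext => x; rewrite /Bcc indicE.
  case: ifPn => h; first by rewrite mem_set //= in_itv /= h.
  by rewrite memNset //= in_itv /= (negbTE h).
apply: measurable_funM.
  by apply: measurableT_comp; [exact: normr_measurable | exact: measurable_funB].
apply: measurableT_comp; first by apply: measurable_indic; exact: measurable_itv.
by apply: measurable_funM; exact: measurable_funB.
Qed.

Section threshold.
Context {d : measure_display} {T : measurableType d} {R : realType}.
Implicit Types (eta : T -> R) (c : R).

Definition threshold eta c : T -> R := fun x => if c < eta x then 1 else 0.

Lemma threshold_in01 eta c x : 0 <= threshold eta c x <= 1.
Proof. by rewrite /threshold; case: ifP; rewrite ?lexx ?ler01. Qed.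

Lemma measurable_threshold eta c : measurable_fun setT eta ->
  measurable_fun setT (threshold eta c).
Proof.
move=> meta; have -> : threshold eta c = \1_(eta @^-1` `]c, +oo[).
  apply/funext => x; rewrite /threshold indicE.
  case: ifPn => h; first by rewrite mem_set //= in_itv /= h.
  by rewrite memNset //= in_itv /= andbT; apply/negP.
by apply/measurable_indicP; rewrite -[_ @^-1` _]setTI; apply: meta.
Qed.
End threshold.

Section integral_cond_prob.
Context {dO dT : measure_display} {Omega : measurableType dO}
  {T : measurableType dT} {R : realType}.
Variables (P : probability Omega R) (S Z : set Omega) (X : Omega -> T) (e : T -> R).
Hypotheses (mS : measurable S) (mZ : measurable Z) (mX : measurable_fun setT X).
Hypothesis eP : cond_prob P S X Z e.
Import HBNNSimple.
Local Open Scope ereal_scope.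

Let me : measurable_fun setT e. Proof. by case: eP. Qed.
Let e_ge0 x : (0 <= e x)%R. Proof. by case: eP => _ [/(_ x)/andP[]]. Qed.
Let mZS : measurable (Z `&` S). Proof. exact: measurableI. Qed.

Lemma integral_cond_prob_indic (B : set T) (r : R) : measurable B -> (0 <= r)%R ->
  \int[P]_(w in Z `&` S) (r * \1_B (X w))%:E =
  \int[P]_(w in S) (r * \1_B (X w) * e (X w))%:E.
Proof.
move=> mB r0; have mXB : measurable (X @^-1` B) by rewrite -[X @^-1` B]setTI; exact: mX.
have mIB : measurable_fun setT (fun w => \1_B (X w) : R) by exact: measurableT_comp.
have mIBe : measurable_fun S (fun w => (\1_B (X w) * e (X w))%:E).
  apply/measurable_EFinP/measurable_funTS/measurable_funM => //.
  exact: measurableT_comp.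
have IBe_ge0 w : S w -> 0 <= (\1_B (X w) * e (X w))%:E by rewrite lee_fin mulr_ge0.
under eq_integral do rewrite EFinM.
under [RHS]eq_integral do rewrite -mulrA EFinM.
rewrite !ge0_integralZl_EFin //; last exact/measurable_EFinP/measurable_funTS.
congr (_ * _).
have -> : \int[P]_(w in Z `&` S) (\1_B (X w))%:E =
          \int[P]_(w in Z `&` S) (\1_(X @^-1` B) w)%:E by [].
rewrite integral_indic // [Z `&` S]setIC setIA.
case: eP => _ [_ hE]; apply: eq_trans (esym (hE _ mB)) _.
rewrite integral_mkcondl; apply: eq_integral => w _.
rewrite /patch indicE -[X w \in B]/(w \in X @^-1` B).
by case: ifP; rewrite ?mul1r ?mul0r.
Qed.

Lemma integral_cond_prob_nnsfun (h : {nnsfun T >-> R}) :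
  \int[P]_(w in Z `&` S) (h (X w))%:E = \int[P]_(w in S) (h (X w) * e (X w))%:E.
Proof.
pose hk (k : R) x := (k * \1_(h @^-1` [set k]) x)%R.
have hk_ge0 k x : (0 <= hk k x)%R.
  by have := nnfun_muleindic_ge0 h k x; rewrite -EFinM lee_fin.
have mhk k : measurable_fun setT (fun w => hk k (X w)).
  by apply: measurable_funM => //; exact: measurableT_comp.
have mhk_ZS k : measurable_fun (Z `&` S) (fun w => (hk k (X w))%:E).
  exact/measurable_EFinP/measurable_funTS.
have mhke_S k : measurable_fun S (fun w => (hk k (X w) * e (X w))%:E).
  apply/measurable_EFinP/measurable_funTS/measurable_funM => //.
  exact: measurableT_comp.
have hk_ge0E k w : (Z `&` S) w -> 0 <= (hk k (X w))%:E by rewrite lee_fin.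
have hke_ge0 k w : S w -> 0 <= (hk k (X w) * e (X w))%:E by rewrite lee_fin mulr_ge0.
under eq_integral do rewrite fimfunE -fsumEFin //.
under [RHS]eq_integral do rewrite fimfunE mulr_fsuml -fsumEFin //.
rewrite !ge0_integral_fsum //.
apply: eq_fsbigr => r /[!inE] -[x _ <-].
exact: integral_cond_prob_indic.
Qed.

Lemma integral_cond_prob (g : T -> R) :
  measurable_fun setT g -> (forall x, 0 <= g x)%R ->
  \int[P]_(w in Z `&` S) (g (X w))%:E = \int[P]_(w in S) (g (X w) * e (X w))%:E.
Proof.
move=> mg g0; have mEg : measurable_fun setT (EFin \o g) by exact/measurable_EFinP.
pose h := nnsfun_approx measurableT mEg.
have h_cvg x : (h n x)%:E @[n --> \oo] --> (g x)%:E.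
  by apply: cvg_nnsfun_approx => // y _; rewrite lee_fin.
have h_nd x : {homo (fun n => h n x) : m n / (m <= n)%N >-> (m <= n)%R}.
  by move=> m n mn; exact/lefP/nd_nnsfun_approx.
have mh n : measurable_fun setT (fun w => h n (X w)) by exact: measurableT_comp.
transitivity (limn (fun n => \int[P]_(w in Z `&` S) (h n (X w))%:E)).
  rewrite -monotone_convergence //.
  - by apply: eq_integral => w _; apply/esym/cvg_lim => //; exact: h_cvg.
  - by move=> n; apply/measurable_EFinP/measurable_funTS.
  - by move=> n w _; rewrite lee_fin.
  - by move=> w _ m n mn; rewrite lee_fin; exact: h_nd.
under eq_fun do rewrite integral_cond_prob_nnsfun.
rewrite -monotone_convergence //.
- apply: eq_integral => w _; apply/cvg_lim => //; rewrite EFinM.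
  under eq_fun do rewrite EFinM.
  by apply: cvgeZr => //; exact: h_cvg.
- by move=> n; apply/measurable_EFinP/measurable_funTS/measurable_funM => //;
    exact: measurableT_comp.
- by move=> n w _; rewrite lee_fin mulr_ge0.
- by move=> w _ m n mn; rewrite lee_fin ler_wpM2r //; exact: h_nd.
Qed.
End integral_cond_prob.

Section Dint.
Context {dO : measure_display} {Omega : measurableType dO} {R : realType}.
Variable P : probability Omega R.

Lemma bounded_integrable (D : set Omega) (h : Omega -> R) (M : R) : measurable D ->
  measurable_fun setT h -> (forall w, 0 <= h w <= M) -> P.-integrable D (EFin \o h).
Proof.
move=> mD mh hM; apply: measurable_bounded_integrable => //.
- exact: le_lt_trans (probability_le1 _ mD) (ltry _).
- exact: measurable_funTS.
exists M; split => [|y My w _]; first exact: num_real.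
by have /andP[h0 h1] := hM w; rewrite /= ger0_norm // (le_trans h1 (ltW My)).
Qed.

Variable S : set Omega.
Hypothesis mS : measurable S.
Implicit Types (A : set Omega) (f g : Omega -> R).

Let integrableIS A f : measurable A -> P.-integrable S (EFin \o f) ->
  P.-integrable (A `&` S) (EFin \o f).
Proof. by move=> mA; apply: integrableS => //; exact: measurableI. Qed.

Lemma DintD A f g : measurable A ->
  P.-integrable S (EFin \o f) -> P.-integrable S (EFin \o g) ->
  Dint P S A (fun w => f w + g w) = Dint P S A f + Dint P S A g.
Proof.
move=> mA intf intg; rewrite /Dint RintegralD ?mulrDl //; first exact: measurableI.
all: exact: integrableIS.
Qed.

Lemma DintB A f g : measurable A ->
  P.-integrable S (EFin \o f) -> P.-integrable S (EFin \o g) ->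
  Dint P S A (fun w => f w - g w) = Dint P S A f - Dint P S A g.
Proof.
move=> mA intf intg; rewrite /Dint RintegralB ?mulrBl //; first exact: measurableI.
all: exact: integrableIS.
Qed.

Lemma DintZl A k f : measurable A -> P.-integrable S (EFin \o f) ->
  Dint P S A (fun w => k * f w) = k * Dint P S A f.
Proof.
move=> mA intf; rewrite /Dint RintegralZl ?mulrA //; first exact: measurableI.
exact: integrableIS.
Qed.

Lemma Dint_lincomb A a b f g : measurable A ->
  P.-integrable S (EFin \o f) -> P.-integrable S (EFin \o g) ->
  Dint P S A (fun w => a * f w + b * g w) = a * Dint P S A f + b * Dint P S A g.
Proof.
move=> mA intf intg.
have intZ k h : P.-integrable S (EFin \o h) ->
    P.-integrable S (EFin \o (fun w => k * h w)).
  by move=> /(integrableZl mS k); apply: eq_integrable => // w _ /=; rewrite EFinM.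
by rewrite DintD ?DintZl //; exact: intZ.
Qed.

Lemma le_Dint A f g : measurable A ->
  P.-integrable S (EFin \o f) -> P.-integrable S (EFin \o g) ->
  (forall w, f w <= g w) -> Dint P S A f <= Dint P S A g.
Proof.
move=> mA intf intg fg; rewrite /Dint ler_wpM2r ?invr_ge0 ?fine_ge0 //.
apply: le_Rintegral => //; first exact: measurableI.
all: exact: integrableIS.
Qed.

Lemma Dint_setC A f : measurable A -> P.-integrable S (EFin \o f) ->
  Dint P S (~` A) f = Dint P S setT f - Dint P S A f.
Proof.
move=> mA intf; rewrite /Dint setTI -mulrBl; congr (_ / _).
have mAS : measurable (A `&` S) by exact: measurableI.
have mCAS : measurable (~` A `&` S) by apply: measurableI => //; exact: measurableC.
have := Rintegral_setU mAS mCAS; rewrite -setIUl setUCr setTI => -> //.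
- by rewrite addrAC subrr add0r.
- by apply/disj_set2P; rewrite setIACA setICr set0I.
Qed.

Lemma Dprob_mul_divK A f : measurable A -> measurable_fun setT f ->
  Dprob P S A * (Dint P S A f / Dprob P S A) = Dint P S A f.
Proof.
move=> mA mf; have [pA|pA] := eqVneq (Dprob P S A) 0; last by rewrite mulrC divfK.
rewrite pA mul0r; apply/esym; move/eqP: pA; rewrite /Dprob /Dint mulf_eq0 invr_eq0.
case/orP => /eqP PA0; last by rewrite PA0 invr0 mulr0.
have mAS : measurable (A `&` S) by exact: measurableI.
have PAS : P (A `&` S) = 0%E by rewrite -[P _]fineK ?PA0 ?fin_num_measure.
rewrite /Rintegral null_set_integral ?mul0r //.
exact/measurable_EFinP/measurable_funTS.
Qed.

Lemma DprobC A : measurable A -> 0 < fine (P S) ->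
  Dprob P S (~` A) = 1 - Dprob P S A.
Proof.
move=> mA PS; rewrite /Dprob -(divff (lt0r_neq0 PS)) -mulrBl; congr (_ / _).
have mAS : measurable (A `&` S) by exact: measurableI.
have mCAS : measurable (~` A `&` S) by apply: measurableI => //; exact: measurableC.
rewrite -[in fine (P S)](setTI S) -(setUCr A) setIUl measureU //.
- by rewrite fineD ?fin_num_measure // addrAC subrr add0r.
- by rewrite setIACA setICr set0I.
Qed.
End Dint.

Section cost_sensitive_risk.
Context {dO dT : measure_display} {Omega : measurableType dO}
  {T : measurableType dT} {R : realType}.
Variables (P : probability Omega R) (S Z : set Omega) (X : Omega -> T).
Hypotheses (mS : measurable S) (mZ : measurable Z) (mX : measurable_fun setT X).
Implicit Types f g e : T -> R.

Let integrable_comp g : measurable_fun setT g -> (forall x, 0 <= g x <= 1) ->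
  P.-integrable S (EFin \o (fun w => g (X w))).
Proof.
by move=> mg g01; apply: (bounded_integrable _ _ _ 1) => //; exact: measurableT_comp.
Qed.

Lemma Dint_cond_prob e g : cond_prob P S X Z e ->
  measurable_fun setT g -> (forall x, 0 <= g x) ->
  Dint P S Z (fun w => g (X w)) = Dint P S setT (fun w => g (X w) * e (X w)).
Proof.
move=> eP mg g0; rewrite /Dint setTI /Rintegral.
by rewrite (integral_cond_prob _ _ _ _ _ mS mZ mX eP).
Qed.

Lemma Dint_cond_probC e g : cond_prob P S X Z e ->
  measurable_fun setT g -> (forall x, 0 <= g x <= 1) ->
  Dint P S (~` Z) (fun w => g (X w)) = Dint P S setT (fun w => g (X w) * (1 - e (X w))).
Proof.
move=> eP mg g01; have [me [e01 _]] := eP.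
have g0 x : 0 <= g x by case/andP: (g01 x).
have ge01 x : 0 <= g x * e x <= 1 := mulr_in01 (g01 x) (e01 x).
rewrite Dint_setC ?integrable_comp // (Dint_cond_prob _ _ eP) //.
rewrite -DintB ?integrable_comp //.
  by congr Dint; apply/funext => w; rewrite mulrBr mulr1.
exact: (integrable_comp (fun x => g x * e x)) (measurable_funM mg me) ge01.
Qed.

Lemma CS_Dint f c : 0 < fine (P S) -> measurable_fun setT f ->
  CS P S X Z f c = (1 - c) * Dint P S Z (fun w => 1 - f (X w))
                   + c * Dint P S (~` Z) (fun w => f (X w)).
Proof.
move=> PS mf.
have mfX : measurable_fun setT (fun w => f (X w)) by exact: measurableT_comp.
rewrite /CS /FNR /FPR -DprobC // [_ * (1 - c)]mulrC [_ * c]mulrC.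
rewrite -(mulrA (1 - c)) -(mulrA c) !Dprob_mul_divK //.
- exact: measurable_funB.
- exact: measurableC.
Qed.

Lemma CS_cond_risk e f c : 0 < fine (P S) -> cond_prob P S X Z e ->
  measurable_fun setT f -> (forall x, 0 <= f x <= 1) ->
  CS P S X Z f c = Dint P S setT (fun w => cond_risk c (e (X w)) (f (X w))).
Proof.
move=> PS eP mf f01; have [me [e01 _]] := eP.
have mf' : measurable_fun setT (fun x => 1 - f x) by exact: measurable_funB.
have me' : measurable_fun setT (fun x => 1 - e x) by exact: measurable_funB.
rewrite CS_Dint // (Dint_cond_prob _ (fun x => 1 - f x) eP) //; last first.
  by move=> x; case/andP: (onem_in01 (f01 x)).
rewrite (Dint_cond_probC _ _ eP) // /cond_risk Dint_lincomb //.
- apply: (integrable_comp (fun x => (1 - f x) * e x)); first exact: measurable_funM.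
  by move=> x; exact: mulr_in01 (onem_in01 (f01 x)) (e01 x).
- apply: (integrable_comp (fun x => f x * (1 - e x))); first exact: measurable_funM.
  by move=> x; exact: mulr_in01 (f01 x) (onem_in01 (e01 x)).
Qed.
End cost_sensitive_risk.

Section fairness_lower_bound.
Context {dO dT : measure_display} {Omega : measurableType dO}
  {T : measurableType dT} {R : realType}.
Variables (P : probability Omega R) (S Z : set Omega) (X : Omega -> T).
Hypotheses (mS : measurable S) (mZ : measurable Z) (mX : measurable_fun setT X)
  (PS : 0 < fine (P S)).

Lemma IphiE (eb : T -> R) (cb : R) : Iphi P S X Z eb cb =
  - Dint P S setT (fun w => Iphi_integrand cb (Dprob P S Z) (eb (X w))).
Proof. by []. Qed.

Lemma Delta_le_CS (eta etabar f : T -> R) (c cb : R) : 0 <= cb <= 1 ->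
  cond_prob P S X Z etabar -> measurable_fun setT eta ->
  measurable_fun setT f -> (forall x, 0 <= f x <= 1) ->
  (forall x, c < eta x -> f x = 1) -> (forall x, eta x < c -> f x = 0) ->
  Delta P S X Z etabar eta c cb <= CS P S X Z f cb.
Proof.
move=> cb01 ebP meta mf f01 f1 f0; have [meb [eb01 _]] := ebP.
have intX (h : Omega -> R) M : measurable_fun setT h -> (forall w, 0 <= h w <= M) ->
  P.-integrable S (EFin \o h) by move=> mh hM; exact: bounded_integrable.
have mB : measurable_fun setT (fun w => Bcc c cb (etabar (X w)) (eta (X w))).
  by apply: measurable_Bcc; exact: measurableT_comp.
have mI : measurable_fun setT
    (fun w => Iphi_integrand cb (Dprob P S Z) (etabar (X w))).
  by apply: measurable_Iphi_integrand; exact: measurableT_comp.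
have B01 w := Bcc_in01 c _ _ (eta (X w)) cb01 (eb01 (X w)).
have I01 w := Iphi_integrand_in01 _ (Dprob P S Z) _ cb01 (eb01 (X w)).
rewrite (CS_cond_risk _ _ _ _ mS mZ mX _ _ _ PS ebP) // /Delta IphiE opprK -DintD //;
  [|exact: intX mB B01|exact: intX mI I01].
apply: le_Dint => //.
- apply: (intX _ 2); first exact: measurable_funD.
  move=> w; have /andP[? ?] := B01 w; have /andP[? ?] := I01 w.
  by apply/andP; split; lra.
- apply: (intX _ 1) => [|w].
    by apply: measurable_cond_risk; exact: measurableT_comp.
  by apply: cond_risk_in01.
- move=> w; apply: Bcc_add_le_cond_risk => //; [exact: f1 | exact: f0 |].
  by case/andP: (Iphi_integrand_bounds _ (Dprob P S Z) _ cb01 (eb01 (X w))).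
Qed.

Lemma CSdiam_threshold_ge (eta etabar : T -> R) (c cb : R) : 0 <= cb <= 1 ->
  cond_prob P S X Z etabar -> measurable_fun setT eta ->
  Num.min (Delta P S X Z etabar eta c cb)
          (Delta P S X Z etabar (fun x => - eta x) (- c) cb)
  <= CSdiam P S X Z (threshold eta c) cb.
Proof.
move=> cb01 ebP meta; have mt := measurable_threshold _ c meta.
have t01 := threshold_in01 eta c.
have fair_t : Delta P S X Z etabar eta c cb <= CS P S X Z (threshold eta c) cb.
  apply: Delta_le_CS => // x; rewrite /threshold; first by move=> ->.
  by move=> /ltW; rewrite leNgt => /negbTE ->.
have fair_tC : Delta P S X Z etabar (fun x => - eta x) (- c) cb
               <= CS P S X Z (fun x => 1 - threshold eta c x) cb.
  apply: Delta_le_CS => //.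
  - exact: measurable_funN.
  - exact: measurable_funB.
  - by move=> x; exact: onem_in01.
  - move=> x; rewrite ltrN2 /threshold => /ltW.
    by rewrite leNgt => /negbTE ->; rewrite subr0.
  - by move=> x; rewrite ltrN2 /threshold => ->; rewrite subrr.
by rewrite /CSdiam le_min !ge_min fair_t fair_tC orbT.
Qed.
End fairness_lower_bound.

Lemma measurable_Dbar_event {d : measure_display} {Omega : measurableType d}
  (eo : bool) (Y : Omega -> bool) :
  measurable [set w | Y w] -> measurable (Dbar_event eo Y).
Proof. by rewrite /Dbar_event; case: eo. Qed.

Lemma Dbar_event_gt0 {d : measure_display} {Omega : measurableType d} {R : realType}
  (P : probability Omega R) (eo : bool) (Y : Omega -> bool) :
  measurable [set w | Y w] -> (eo -> (0 < P [set w | Y w])%E) ->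
  0 < fine (P (Dbar_event eo Y)).
Proof.
rewrite /Dbar_event; case: eo => mY PY; last by rewrite probability_setT.
by rewrite fine_gt0 // PY // (le_lt_trans (probability_le1 _ mY)) ?ltry.
Qed.

Lemma CS_threshold_le {dO dT : measure_display} {Omega : measurableType dO}
  {T : measurableType dT} {R : realType} (P : probability Omega R)
  (S Z : set Omega) (X : Omega -> T) (e f : T -> R) (c : R) :
  measurable S -> measurable Z -> measurable_fun setT X -> 0 < fine (P S) ->
  cond_prob P S X Z e -> 0 <= c <= 1 ->
  measurable_fun setT f -> (forall x, 0 <= f x <= 1) ->
  CS P S X Z (threshold e c) c <= CS P S X Z f c.
Proof.
move=> mS mZ mX PS eP c01 mf f01; have [me [e01 _]] := eP.
have mt := measurable_threshold _ c me; have t01 := threshold_in01 e c.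
rewrite !(CS_cond_risk _ _ _ _ mS mZ mX _ _ _ PS eP) //.
have intX (g : T -> R) : measurable_fun setT g -> (forall x, 0 <= g x <= 1) ->
    P.-integrable S (EFin \o (fun w => cond_risk c (e (X w)) (g (X w)))).
  move=> mg g01; apply: (bounded_integrable _ _ _ 1) => [//||w].
    by apply: measurable_cond_risk; exact: measurableT_comp.
  exact: cond_risk_in01.
apply: le_Dint => // [||w]; [exact: intX | exact: intX |].
exact: cond_risk_threshold_le.
Qed.

Lemma Vfront_minimizer {dO dT : measure_display} {Omega : measurableType dO}
  {T : measurableType dT} {R : realType} (P : probability Omega R)
  (X : Omega -> T) (Y Ybar : Omega -> bool) (S : set Omega) (c cb tau : R)
  (f0 : T -> R) :
  measurable_fun setT f0 -> (forall x, 0 <= f0 x <= 1) ->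
  tau <= CSdiam P S X [set w | Ybar w] f0 cb ->
  (forall f : T -> R, measurable_fun setT f -> (forall x, 0 <= f x <= 1) ->
     CS P setT X [set w | Y w] f0 c <= CS P setT X [set w | Y w] f c) ->
  Vfront P X Y Ybar S c cb tau = (CS P setT X [set w | Y w] f0 c)%:E.
Proof.
move=> mf0 f01 feas opt; apply/le_anti/andP; split.
  by apply: ereal_inf_lbound; exists f0.
by apply: le_ereal_inf_tmp => _ [f [mf f01' _] <-]; rewrite lee_fin opt.
Qed.

Theorem proposition3 (dO dT : measure_display) (Omega : measurableType dO)
  (T : measurableType dT) (R : realType) (P : probability Omega R)
  (X : Omega -> T) (Ybar Y : Omega -> bool) (c cb : R) (eo : bool)
  (eta etabar : T -> R) :
  measurable_fun setT X ->
  measurable [set w | Ybar w] -> measurable [set w | Y w] ->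
  0 <= c <= 1 -> 0 <= cb <= 1 ->
  (eo -> (0 < P [set w | Y w])%E) ->
  cond_prob P setT X [set w | Y w] eta ->
  cond_prob P (Dbar_event eo Y) X [set w | Ybar w] etabar ->
  let S := Dbar_event eo Y in
  let tau_star :=
    Num.min (Delta P S X [set w | Ybar w] etabar eta c cb)
            (Delta P S X [set w | Ybar w] etabar (fun x => - eta x) (- c) cb) in
  forall tau : R, 0 <= tau <= tau_star ->
    frontier P X Y Ybar S c cb tau = 0%E.
Proof.
move=> mX mYb mY c01 cb01 PY etaP etabarP S tau_star tau /andP[tau0 tau_le].
have mS : measurable S := measurable_Dbar_event eo Y mY.
have PS : 0 < fine (P S) := Dbar_event_gt0 P eo Y mY PY.
have PT : 0 < fine (P setT) by rewrite probability_setT.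
have [meta _] := etaP.
pose fs := threshold eta c.
have fs_opt (f : T -> R) : measurable_fun setT f -> (forall x, 0 <= f x <= 1) ->
    CS P setT X [set w | Y w] fs c <= CS P setT X [set w | Y w] f c.
  exact: CS_threshold_le.
have fs_feasible : tau_star <= CSdiam P S X [set w | Ybar w] fs cb.
  exact: CSdiam_threshold_ge.
have V_fs t : t <= tau_star ->
    Vfront P X Y Ybar S c cb t = (CS P setT X [set w | Y w] fs c)%:E.
  move=> t_le; apply: Vfront_minimizer; [exact: measurable_threshold |
    exact: threshold_in01 | exact: le_trans t_le fs_feasible | exact: fs_opt].
by rewrite /frontier !V_fs ?subee // (le_trans tau0).
Qed.
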